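(* Let $\mathbf{L}'$ be an ortholattice with lattice reduct $\mathbf{L}$, and let $(P_{\mathbf{L}},E,\mathscr{T}_{\mathbf{L}},g)$ be its dual. Then for all $x\in P_{\mathbf{L}}$ and all $x,y\in P_{\mathbf{L}}$ the map $g$ satisfies: (M1) $g(g(x))=x$; (M2) $xE\subseteq yE\implies Eg(x)\subseteq Eg(y)$; (M3) $Ex\subseteq Ey\implies g(x)E\subseteq g(y)E$; (O) for every $x\in P_{\mathbf{L}}$ there exists $y\in P_{\mathbf{L}}$ with $yE\subseteq xE$ and $Ey\subseteq Eg(x)$.
   Context: An ortholattice is a bounded lattice $(L;\vee,\wedge,0,1)$ with an operation $'$ satisfying $a''=a$, $a\wedge a'=0$, $a\vee a'=1$ and the De Morgan laws. A partial homomorphism $\mathbf{L}\to\mathbf{2}$ is a partial map $f:L\to\{0,1\}$ whose domain is a $(0,1)$-sublattice and whose restriction is a $(0,1)$-homomorphism; an MPH is one with no proper extension; $P_{\mathbf{L}}$ is the set of MPHs. $(f,h)\in E$ iff $f(a)\le h(a)$ for all $a\in\mathrm{dom}f\cap\mathrm{dom}h$. $\mathscr{T}_{\mathbf{L}}$ has subbasis of closed sets $V_a=\{f: f(a)=0\}$, $W_a=\{f: f(a)=1\}$. The dual of $\mathbf{L}'$ is $(P_{\mathbf{L}},E,\mathscr{T}_{\mathbf{L}},g)$ where $g(f)(a)=0$ if $f(a')=1$, $g(f)(a)=1$ if $f(a')=0$, undefined otherwise (an MPH). For $x$: $xE=\{y:(x,y)\in E\}$, $Ex=\{y:(y,x)\in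 E\}$. *)

From mathcomp Require Import all_boot all_order.
Set Implicit Arguments. Unset Strict Implicit. Unset Printing Implicit Defensive.
Import Order.TTheory.
Local Open Scope order_scope.

Section Ortho.
Context {disp : Order.disp_t} {L : tbLatticeType disp}.

Definition orthocomplementation (c : L -> L) : Prop :=
  (forall a, c (c a) = a) /\
  (forall a, a `&` c a = \bot) /\
  (forall a, a `|` c a = \top) /\
  (forall a b, c (a `|` b) = c a `&` c b) /\
  (forall a b, c (a `&` b) = c a `|` c b).

(* a partial map L -> 2 (2 = bool, 0 = false, 1 = true); dom f = {a | f a <> None} *)
Definition pmapL := L -> option bool.

(* domain is a (0,1)-sublattice and the restriction is a (0,1)-homomorphism *)
Definition partial_hom (f : pmapL) : Prop :=
  f \bot = Some false /\ f \top = Some true /\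
  (forall a b u v, f a = Some u -> f b = Some v ->
     f (a `&` b) = Some (u && v) /\ f (a `|` b) = Some (u || v)).

Definition extends (f h : pmapL) : Prop := forall a u, f a = Some u -> h a = Some u.

Definition MPH (f : pmapL) : Prop :=
  partial_hom f /\ forall h, partial_hom h -> extends f h -> h = f.

Definition Erel (f h : pmapL) : Prop :=
  forall a u v, f a = Some u -> h a = Some v -> (u ==> v).

Definition gmap (c : L -> L) (f : pmapL) : pmapL :=
  fun a => match f (c a) with Some b => Some (~~ b) | None => None end.

End Ortho.

(** Since [c] is an involutive De Morgan complement, [g] maps partial
    homomorphisms to partial homomorphisms and respects extension, so it is an
    involution of the space of MPHs that reverses [E]; (M1)-(M3) follow.
    For (O), the elements sent to 1 by an MPH [x] generate a proper filter [U];
    sending [U] to 1 and its complements to 0 is a partial homomorphism, and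
    any MPH [y] extending it (Zorn) is below [x] on [x]'s 1-set and below
    [g(x)] on [g(x)]'s 0-set. *)

From mathcomp Require Import all_boot all_order.
From mathcomp Require Import boolp classical_sets.
Set Implicit Arguments. Unset Strict Implicit. Unset Printing Implicit Defensive.
Import Order.TTheory.
Local Open Scope order_scope.

Section PartialMaps.
Context {disp : Order.disp_t} {L : tbLatticeType disp}.

Lemma extends_antisym (f h : @pmapL _ L) : extends f h -> extends h f -> f = h.
Proof.
move=> Efh Ehf; apply: funext => a.
case Hf: (f a) => [u|]; first by rewrite (Efh _ _ Hf).
by case Hh: (h a) => [u|] //; rewrite (Ehf _ _ Hh) in Hf.
Qed.

Section ChainUnion.
Variables (I : Type) (F : I -> @pmapL _ L) (A : set I).
Hypothesis A_chain : total_on A (fun i j => extends (F i) (F j)).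

Definition chain_union : @pmapL _ L := fun a =>
  if pselect (exists2 i, A i & F i a = Some true) then Some true
  else if pselect (exists2 i, A i & F i a = Some false) then Some false
  else None.

Lemma chain_unionE a u : chain_union a = Some u <-> exists2 i, A i & F i a = Some u.
Proof.
rewrite /chain_union; case: pselect => [[i Ai Fi]|nT] /=.
  split=> [[<-]|[j Aj Fj]]; first by exists i.
  have [E|E] := A_chain Ai Aj; first by move: (E _ _ Fi); rewrite Fj => -[->].
  by move: (E _ _ Fj); rewrite Fi => -[->].
case: pselect => [[i Ai Fi]|nF] /=.
  split=> [[<-]|[j Aj]]; first by exists i.
  by case: u => // Fj; case: nT; exists j.
by split=> // -[j Aj]; case: u => Fj; [case: nT|case: nF]; exists j.
Qed.

Lemma extends_chain_union i : A i -> extends (F i) chain_union.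
Proof. by move=> Ai a u Fi; apply/chain_unionE; exists i. Qed.

Lemma partial_hom_chain_union i0 : A i0 ->
  (forall i, A i -> partial_hom (F i)) -> partial_hom chain_union.
Proof.
move=> Ai0 AF; have [F0 [F1 _]] := AF _ Ai0.
split; [|split]; try by apply/chain_unionE; exists i0.
move=> a b u v /chain_unionE[i Ai Fa] /chain_unionE[j Aj Fb].
have [Eij|Eji] := A_chain Ai Aj.
- have [_ [_ FM]] := AF _ Aj; have [FI FU] := FM _ _ _ _ (Eij _ _ Fa) Fb.
  by split; apply/chain_unionE; exists j.
- have [_ [_ FM]] := AF _ Ai; have [FI FU] := FM _ _ _ _ Fa (Eji _ _ Fb).
  by split; apply/chain_unionE; exists i.
Qed.

End ChainUnion.

Lemma MPH_extension (f : @pmapL _ L) : partial_hom f ->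
  exists2 h, MPH h & extends f h.
Proof.
move=> hf.
pose T := {h : @pmapL _ L | partial_hom h /\ extends f h}.
pose R (s t : T) := `[< extends (sval s) (sval t) >].
pose f0 : T := exist _ f (conj hf (fun _ _ => id)).
have [t tmax] : exists t, premaximal R t.
  apply: (@ZL_preorder T f0 R).
  - by move=> t; apply/asboolP.
  - by move=> r s t /asboolP Ers /asboolP Est; apply/asboolP => a u /Ers /Est.
  move=> A A_chain.
  have {}A_chain : total_on A (fun s t => extends (sval s) (sval t)).
    by move=> s t As At; have [/asboolP|/asboolP] := A_chain _ _ As At; auto.
  have [[s0 As0]|A0] := pselect (exists s, A s); last first.
    by exists f0 => s As; case: A0; exists s.
  have hU := partial_hom_chain_union A_chain As0 (fun s _ => proj1 (svalP s)).
  have fU : extends f (chain_union sval A).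
    by move=> a u /(proj2 (svalP s0)); apply: extends_chain_union.
  exists (exist _ (chain_union sval A) (conj hU fU) : T) => s As; apply/asboolP.
  exact: extends_chain_union.
have [ht ft] := svalP t.
exists (sval t) => //; split=> // h hh th.
have fh : extends f h by move=> a u /ft /th.
have /tmax/asboolP ht' : R t (exist _ h (conj hh fh)) by apply/asboolP.
exact/esym/extends_antisym.
Qed.

End PartialMaps.

Section Orthocomplement.
Context {disp : Order.disp_t} {L : tbLatticeType disp} (c : L -> L).
Hypothesis Hc : orthocomplementation c.

Lemma complK a : c (c a) = a. Proof. by case: Hc. Qed.
Lemma meet_compl a : a `&` c a = \bot. Proof. by case: Hc => _ []. Qed.
Lemma compl_join a b : c (a `|` b) = c a `&` c b.
Proof. by case: Hc => _ [_ [_ []]]. Qed.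
Lemma compl_meet a b : c (a `&` b) = c a `|` c b.
Proof. by case: Hc => _ [_ [_ []]]. Qed.
Lemma compl_top : c \top = \bot. Proof. by rewrite -(meet_compl \top) meet1x. Qed.
Lemma compl_bot : c \bot = \top. Proof. by rewrite -compl_top complK. Qed.

Lemma gmapE (f : @pmapL _ L) a u : gmap c f a = Some u <-> f (c a) = Some (~~ u).
Proof.
by rewrite /gmap; case: (f (c a)) => // b; split=> [[<-]|[->]]; rewrite ?negbK.
Qed.

Lemma gmapK (f : @pmapL _ L) : gmap c (gmap c f) = f.
Proof. by apply: funext => a; rewrite /gmap complK; case: (f a) => // b; rewrite negbK. Qed.

Lemma partial_hom_gmap f : partial_hom f -> partial_hom (gmap c f).
Proof.
move=> [f0 [f1 fM]]; split; [|split].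
- by apply/gmapE; rewrite compl_bot.
- by apply/gmapE; rewrite compl_top.
move=> a b u v /gmapE fa /gmapE fb; have [fI fU] := fM _ _ _ _ fa fb.
by split; apply/gmapE; rewrite ?compl_meet ?compl_join ?negb_and ?negb_or.
Qed.

Lemma extends_gmap f h : extends f h -> extends (gmap c f) (gmap c h).
Proof. by move=> Efh a u /gmapE /Efh /gmapE. Qed.

Lemma MPH_gmap f : MPH f -> MPH (gmap c f).
Proof.
move=> [hf fmax]; split; first exact: partial_hom_gmap.
move=> h hh /extends_gmap; rewrite gmapK => Efh.
by rewrite -(fmax _ (partial_hom_gmap hh) Efh) gmapK.
Qed.

Lemma Erel_gmap f h : Erel f h -> Erel (gmap c h) (gmap c f).
Proof.
move=> Efh a u v /gmapE ha /gmapE fa.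
by have := Efh _ _ _ fa ha; case: u v {ha fa} => [] [].
Qed.

Lemma Erel_gmapr f h : Erel f (gmap c h) -> Erel h (gmap c f).
Proof. by move/Erel_gmap; rewrite gmapK. Qed.

Lemma Erel_gmapl f h : Erel (gmap c f) h -> Erel (gmap c h) f.
Proof. by move/Erel_gmap; rewrite gmapK. Qed.

Section ProperFilter.
Variable U : set L.
Hypotheses (U_top : U \top) (U_nbot : ~ U \bot).
Hypothesis U_up : forall a b, U a -> a <= b -> U b.
Hypothesis U_meet : forall a b, U a -> U b -> U (a `&` b).

Definition filter_pmap : @pmapL _ L := fun b =>
  if pselect (U b) then Some true
  else if pselect (U (c b)) then Some false
  else None.

Lemma filter_pmapE b u : filter_pmap b = Some u <-> U (if u then b else c b).
Proof.
have U_compl : U b -> ~ U (c b).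
  by move=> Ub /(U_meet Ub); rewrite meet_compl.
rewrite /filter_pmap; case: pselect => [Ub|nUb].
  by case: u => //; split=> // /(U_compl Ub).
by case: pselect => [Ucb|nUcb]; case: u.
Qed.

Lemma partial_hom_filter_pmap : partial_hom filter_pmap.
Proof.
split; [|split]; try by apply/filter_pmapE; rewrite ?compl_bot.
move=> a b [] [] /filter_pmapE Ua /filter_pmapE Ub;
  split; apply/filter_pmapE; rewrite /= ?compl_meet ?compl_join;
  by [apply: U_meet | apply: U_up Ua (leUl _ _) | apply: U_up Ub (leUr _ _)].
Qed.

End ProperFilter.

Lemma orthogonal_MPH_exists (x : @pmapL _ L) : MPH x ->
  exists y, MPH y /\
    (forall z, MPH z -> Erel y z -> Erel x z) /\
    (forall z, MPH z -> Erel z y -> Erel z (gmap c x)).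
Proof.
move=> [[x0 [x1 xM]] _].
pose U b := exists2 d, x d = Some true & d <= b.
have U_up a b : U a -> a <= b -> U b.
  by move=> [d xd da] ab; exists d => //; apply: le_trans ab.
have U_meet a b : U a -> U b -> U (a `&` b).
  move=> [d1 xd1 le1] [d2 xd2 le2]; exists (d1 `&` d2); last exact: leI2.
  by have [-> _] := xM _ _ _ _ xd1 xd2.
have U_top : U \top by exists \top.
have U_nbot : ~ U \bot by case=> d xd; rewrite lex0 => /eqP ed; rewrite ed x0 in xd.
have x_U a : x a = Some true -> U a by exists a.
have hU := partial_hom_filter_pmap U_top U_nbot U_up U_meet.
have [y My Ey] := MPH_extension hU.
have y_U a u : U (if u then a else c a) -> y a = Some u.
  by move/(filter_pmapE U_nbot U_meet)/Ey.
exists y; split=> //; split=> z _ Eyz a u v.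
- by case: u => // /x_U /(y_U _ true); apply: Eyz.
- case: v => [|za /gmapE /x_U /(y_U _ false) ya]; first by rewrite implybT.
  exact: Eyz za ya.
Qed.

End Orthocomplement.

Theorem theorem4p5 (disp : Order.disp_t) (L : tbLatticeType disp) (c : L -> L)
  (Hc : orthocomplementation c) :
  (* (M1) *)
  (forall x : @pmapL _ L, MPH x -> gmap c (gmap c x) = x) /\
  (* (M2) xE ⊆ yE -> E g(x) ⊆ E g(y) *)
  (forall x y : @pmapL _ L, MPH x -> MPH y ->
     (forall z, MPH z -> Erel x z -> Erel y z) ->
     (forall z, MPH z -> Erel z (gmap c x) -> Erel z (gmap c y))) /\
  (* (M3) Ex ⊆ Ey -> g(x)E ⊆ g(y)E *)
  (forall x y : @pmapL _ L, MPH x -> MPH y ->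
     (forall z, MPH z -> Erel z x -> Erel z y) ->
     (forall z, MPH z -> Erel (gmap c x) z -> Erel (gmap c y) z)) /\
  (* (O) *)
  (forall x : @pmapL _ L, MPH x ->
     exists y, MPH y /\
       (forall z, MPH z -> Erel y z -> Erel x z) /\
       (forall z, MPH z -> Erel z y -> Erel z (gmap c x))).
Proof.
split; [|split; [|split]].
- by move=> x _; apply: gmapK.
- move=> x y _ _ xy z Mz /(Erel_gmapr Hc) xgz.
  exact/(Erel_gmapr Hc)/xy/xgz/MPH_gmap.
- move=> x y _ _ xy z Mz /(Erel_gmapl Hc) gzx.
  exact/(Erel_gmapl Hc)/xy/gzx/MPH_gmap.
- exact: orthogonal_MPH_exists.
Qed.
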